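(* Let $\mathcal I$ index a finite set of strategies for the iterated Prisoner's Dilemma. Suppose the strategy indexed by $i^*\in\mathcal I$ is a strictly firm memory-one vector $\mathbf p^{i^*}$ with initial play $d$. If for no other $j\in\mathcal I$ is the strategy vector $\mathbf p^j$ firm, then $i^*$ is an ESS for the game $\{A_{ij}:i,j\in\mathcal I\}$.
   Context: Iterated Prisoner's Dilemma with normalized payoffs $T=1>R>P>S=0$, $2R>1$; outcomes ordered $cc,cd,dc,dd$ (own play first); payoff vectors $\mathbf S_X=(R,0,1,P)$, $\mathbf S_Y=(R,1,0,P)$. A memory-one strategy vector is $\mathbf p\in[0,1]^4$, $p_k$ the probability of playing $c$ after the $k$-th outcome, outcomes labeled from the player's own perspective; it is firm if $p_4=0$. A strategy is such a vector together with an initial play. For a strategy pattern of the opponent Y (any possibly random, history-dependent rule), a limit distribution is a limit point $\mathbf v$ of the Cesàro averages of the round-$n$ outcome distributions, with $s_X=\langle\mathbf v\cdot\mathbf S_X\rangle$, $s_Y=\langle\mathbf v\cdot\mathbf S_Y\rangle$. A memory-one $\mathbf p$ for X is strictly firm if it is firm and for every strategy pattern of Y and every associated limit distribution, $s_Y\ge P$ implies $v_4=1$. $A_{ij}$ is the long-run (Cesàro-limit) average payoff of X when X uses strategy $i$ and Y uses strategy $j$. $i^*$ is an ESS if $A_{ji^*}<A_{i^*i^*}$ for all $j\ne i^*$. *)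

From HB Require Import structures.
From mathcomp Require Import all_boot all_order all_algebra.
From mathcomp Require Import all_classical all_reals all_analysis.
Set Implicit Arguments. Unset Strict Implicit. Unset Printing Implicit Defensive.
Import Order.TTheory GRing.Theory Num.Theory numFieldNormedType.Exports.
Local Open Scope ring_scope.

(* Outcomes are 'I_4, ordered cc (0), cd (1), dc (2), dd (3), from X's
   perspective (X's own play first). A history is the sequence of outcomes
   of the rounds played so far. *)
Definition outcome := 'I_4.
Definition history := seq outcome.

Section IPD.
Variable R : realType.

Definition SX (Rw Pn : R) (o : outcome) : R :=
  match val o with 0%N => Rw | 1%N => 0 | 2%N => 1 | _ => Pn end.
Definition SY (Rw Pn : R) (o : outcome) : R :=
  match val o with 0%N => Rw | 1%N => 1 | 2%N => 0 | _ => Pn end.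

Definition dotv (v S : outcome -> R) : R := \sum_(o < 4) v o * S o.

(* a memory-one strategy vector: p k = probability of playing c after the
   k-th outcome (own perspective) *)
Definition memvec := outcome -> R.
Definition is_memvec (p : memvec) := forall k, 0 <= p k <= 1.
Definition firm (p : memvec) := p (inord 3) = 0.

(* a strategy pattern of Y: probability that Y plays c in the next round,
   as a function of the whole history so far (outcomes recorded from X's
   perspective) *)
Definition pattern := history -> R.
Definition is_pattern (q : pattern) := forall h, 0 <= q h <= 1.

Definition Xprob (p : memvec) (x0 : bool) (h : history) : R :=
  match h with
  | [::] => if x0 then 1 else 0
  | o :: h' => p (last o h')
  end.

Definition out_prob (px py : R) (o : outcome) : R :=
  (if (val o < 2)%N then px else 1 - px) *
  (if odd (val o) then 1 - py else py).

Definition hist_prob (p : memvec) (x0 : bool) (q : pattern) (h : history) : R :=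
  \prod_(k < size h)
    out_prob (Xprob p x0 (take k h)) (q (take k h)) (nth ord0 h k).

(* distribution of the outcome of round n (rounds numbered from 0) *)
Definition round_dist (p : memvec) (x0 : bool) (q : pattern) (n : nat)
  (o : outcome) : R :=
  \sum_(h : (n.+1).-tuple outcome | tnth h ord_max == o)
     hist_prob p x0 q (tval h).

Definition cesaro (p : memvec) (x0 : bool) (q : pattern) (N : nat)
  (o : outcome) : R :=
  (N.+1)%:R^-1 * \sum_(n < N.+1) round_dist p x0 q n o.

Definition limit_dist (p : memvec) (x0 : bool) (q : pattern)
  (v : outcome -> R) : Prop :=
  forall e : R, 0 < e -> forall M : nat, exists N : nat,
    (M <= N)%N /\ forall o, `|cesaro p x0 q N o - v o| < e.

Definition strictly_firm (Rw Pn : R) (p : memvec) : Prop :=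
  firm p /\
  forall (x0 : bool) (q : pattern), is_pattern q ->
  forall v, limit_dist p x0 q v -> Pn <= dotv v (SY Rw Pn) -> v (inord 3) = 1.

(* outcome from Y's perspective: swap cd and dc *)
Definition swap_out (o : outcome) : outcome :=
  if val o == 1%N then inord 2 else if val o == 2%N then inord 1 else o.

Definition mem_pattern (q : memvec) (y0 : bool) : pattern :=
  fun h => match h with
  | [::] => if y0 then 1 else 0
  | o :: h' => q (swap_out (last o h'))
  end.

Definition payoffA (Rw Pn : R) (p : memvec) (x0 : bool) (q : memvec) (y0 : bool) : R :=
  limn (fun N => dotv (cesaro p x0 (mem_pattern q y0) N) (SX Rw Pn)).

End IPD.

From Pilot Require Import Defs.
From HB Require Import structures.
From mathcomp Require Import all_boot all_order all_algebra.
From mathcomp Require Import all_classical all_reals all_analysis unstable.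
From mathcomp Require Import ring lra.
Import Order.TTheory GRing.Theory Num.Theory numFieldNormedType.Exports.
Set Implicit Arguments. Unset Strict Implicit.
Local Open Scope ring_scope.
Local Open Scope classical_set_scope.

(* Against itself, istar opens with d and never cooperates after dd, so the
   play stays at dd and A istar istar = P.  Against a non-firm j, every dd is
   followed, as seen by istar, by dc with probability p^j_4 > 0, so no limit
   point of the Cesaro averages of the play is concentrated on dd; by strict
   firmness every limit point then pays the opponent j less than P.  Swapping
   the roles of the players, A j istar is exactly the limit of the opponent's
   Cesaro payoffs, hence A j istar < P. *)

Section Sequences.
Variable R : realType.

Lemma limn_dvg (u : nat -> R) : ~ cvgn u -> limn u = 0.
Proof.
move=> u_dvg; rewrite /lim /lim_in getPN //= => l ul; apply: u_dvg.
by apply/cvg_ex; exists l.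
Qed.

Lemma increasing_seq_cvgn (f : nat -> nat) :
  increasing_seq f -> f n @[n --> \oo] --> \oo.
Proof.
move=> /mono_leq_infl f_infl P [N _ PN]; exists N => // n /= Nn.
exact/PN/(leq_trans Nn).
Qed.

Lemma bolzano_weierstrass_fin (T : finType) (u : nat -> T -> R) (C : R) :
  (forall n i, `|u n i| <= C) ->
  exists g (v : T -> R), increasing_seq g /\ forall i, u (g n) i @[n --> \oo] --> v i.
Proof.
move=> uC.
suff [g [v [g_incr gv]]] : exists g (v : T -> R), increasing_seq g /\
    forall i, i \in enum T -> u (g n) i @[n --> \oo] --> v i.
  by exists g, v; split=> // i; apply: gv; rewrite mem_enum.
elim: (enum T) => [|o s [g [v [g_incr gv]]]].
  by exists id, (fun=> 0); split.
have uo_bnd : bounded_fun (fun n => u (g n) o).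
  exists C; split; first exact: num_real.
  by move=> D CD n _; apply: le_trans (uC _ _) (ltW CD).
have [f f_incr /cvg_ex[l uol]] := bolzano_weierstrass uo_bnd.
exists (g \o f), (fun i => if i == o then l else v i); split.
  by move=> n m /=; rewrite g_incr -leEnat f_incr.
move=> i; rewrite inE; case: eqP => [-> _ | _ /= i_s]; first exact: uol.
exact: cvg_comp (increasing_seq_cvgn f_incr) (gv i i_s).
Qed.

Lemma limit_point_of_subseq (T : finType) (u : nat -> T -> R) g (v : T -> R) :
  increasing_seq g -> (forall i, u (g n) i @[n --> \oo] --> v i) ->
  forall e, 0 < e -> forall M, exists N, (M <= N)%N /\ forall i, `|u N i - v i| < e.
Proof.
move=> g_incr gv e e_gt0 M.
have near_v : \forall n \near \oo, forall i, `|u (g n) i - v i| < e.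
  apply: filter_forall => i; move/cvgrPdist_lt : (gv i) => /(_ e e_gt0).
  by apply: filterS => n; rewrite distrC.
have [n [Mn nv]] := filter_ex (filterI (nbhs_infty_ge M) near_v).
by exists (g n); split=> //; apply: leq_trans Mn (mono_leq_infl g_incr n).
Qed.

End Sequences.

Local Notation dd := (inord 3 : outcome).
Local Notation dc := (inord 2 : outcome).

Lemma sum_tuple_rcons (V : nmodType) (T : finType) m (F : seq T -> V) :
  \sum_(t : m.+1.-tuple T) F t = \sum_(t : m.-tuple T) \sum_(x : T) F (rcons t x).
Proof.
rewrite pair_big /= (reindex (fun tx : m.-tuple T * T => rcons_tuple tx.1 tx.2)) //.
apply: onW_bij; exists (fun t : m.+1.-tuple T =>
  (belast_tuple (thead t) (behead_tuple t), last (thead t) (behead t))).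
  case=> [[[|y s] t_sz] x] /=; congr (_, _); try by apply: val_inj.
    by apply: val_inj; rewrite /= belast_rcons.
  by rewrite last_rcons.
by case=> [[|y s] t_sz] //; apply: val_inj; rewrite /= -lastI.
Qed.

Lemma last_tuple (T : Type) n (t : n.+1.-tuple T) :
  exists x s, tval t = x :: s /\ last x s = tnth t ord_max.
Proof.
case: t => [[|x s] t_sz] //=; exists x, s; split => //.
rewrite (tnth_nth x) /=.
have -> : n = size s by move/eqP: t_sz => /= [].
by rewrite -[last x s]/(last x (x :: s)) -(nth_last x).
Qed.

Section Distributions.
Variable R : realType.

Lemma out_prob_ge0 (px py : R) o :
  0 <= px <= 1 -> 0 <= py <= 1 -> 0 <= out_prob px py o.
Proof.
move=> /andP[px_ge0 px_le1] /andP[py_ge0 py_le1]; rewrite /out_prob.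
by apply: mulr_ge0; case: ifP => _; rewrite ?subr_ge0.
Qed.

Lemma sum_out_prob (px py : R) : \sum_(o < 4) out_prob px py o = 1.
Proof. rewrite !big_ord_recr big_ord0 /= /out_prob /=; ring. Qed.

Lemma out_prob_dd (px py : R) : out_prob px py dd = (1 - px) * (1 - py).
Proof. by rewrite /out_prob /= inordK. Qed.

Lemma out_prob_dc (px py : R) : out_prob px py dc = (1 - px) * py.
Proof. by rewrite /out_prob /= inordK. Qed.

Lemma memvec_pattern (p : memvec R) y0 : is_memvec p -> is_pattern (mem_pattern p y0).
Proof. by move=> p01 [|o h] /=; [case: y0; rewrite ?ler01 ?lexx | exact: p01]. Qed.

Variables (p : memvec R) (x0 : bool) (q : pattern R).
Hypotheses (p01 : is_memvec p) (q01 : is_pattern q).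

Lemma Xprob_in01 h : 0 <= Xprob p x0 h <= 1.
Proof. by case: h => [|o h] /=; [case: x0; rewrite ?ler01 ?lexx | exact: p01]. Qed.

Lemma hist_prob_ge0 h : 0 <= hist_prob p x0 q h.
Proof.
by apply: prodr_ge0 => k _; apply: out_prob_ge0; [exact: Xprob_in01 | exact: q01].
Qed.

Lemma hist_prob_rcons h o : hist_prob p x0 q (rcons h o) =
  hist_prob p x0 q h * out_prob (Xprob p x0 h) (q h) o.
Proof.
rewrite /hist_prob size_rcons big_ord_recr -cats1 /=; congr (_ * _).
  apply: eq_bigr => k _ /=.
  by rewrite takel_cat 1?ltnW // nth_cat ltn_ord.
by rewrite take_size_cat // nth_cat ltnn subnn.
Qed.

Lemma round_distE n o : round_dist p x0 q n o =
  \sum_(t : n.-tuple outcome) hist_prob p x0 q t * out_prob (Xprob p x0 t) (q t) o.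
Proof.
rewrite /round_dist big_mkcond /=.
under eq_bigr do rewrite (tnth_nth ord0).
rewrite (sum_tuple_rcons _ (fun s => if nth ord0 s n == o then hist_prob p x0 q s else 0)).
apply: eq_bigr => t _; rewrite (bigD1 o) //= big1 ?addr0.
  by rewrite nth_rcons size_tuple ltnn !eqxx hist_prob_rcons.
by move=> x xo; rewrite nth_rcons size_tuple ltnn eqxx (negbTE xo).
Qed.

Lemma sum_hist_prob n : \sum_(t : n.-tuple outcome) hist_prob p x0 q t = 1.
Proof.
elim: n => [|n IH].
  rewrite (eq_bigr (fun=> hist_prob p x0 q [::])); last by move=> t _; rewrite tuple0.
  by rewrite sumr_const card_tuple expn0 /hist_prob big_ord0.
rewrite sum_tuple_rcons -IH; apply: eq_bigr => t _.
by under eq_bigr do rewrite hist_prob_rcons; rewrite -mulr_sumr sum_out_prob mulr1.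
Qed.

Lemma sum_round_dist n : \sum_(o < 4) round_dist p x0 q n o = 1.
Proof.
under eq_bigr do rewrite round_distE.
rewrite exchange_big /= -(sum_hist_prob n); apply: eq_bigr => t _.
by rewrite -mulr_sumr sum_out_prob mulr1.
Qed.

Lemma round_dist_ge0 n o : 0 <= round_dist p x0 q n o.
Proof. by apply: sumr_ge0 => t _; apply: hist_prob_ge0. Qed.

Lemma round_dist_le1 n o : round_dist p x0 q n o <= 1.
Proof.
rewrite -(sum_round_dist n) (bigD1 o) //= lerDl.
by apply: sumr_ge0 => i _; apply: round_dist_ge0.
Qed.

Lemma cesaro_ge0 N o : 0 <= Defs.cesaro p x0 q N o.
Proof.
apply: mulr_ge0; first by rewrite invr_ge0.
by apply: sumr_ge0 => n _; apply: round_dist_ge0.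
Qed.

Lemma sum_cesaro N : \sum_(o < 4) Defs.cesaro p x0 q N o = 1.
Proof.
rewrite /Defs.cesaro -mulr_sumr exchange_big /=.
under eq_bigr do rewrite sum_round_dist.
by rewrite sumr_const card_ord mulVf // pnatr_eq0.
Qed.

Lemma cesaro_le1 N o : Defs.cesaro p x0 q N o <= 1.
Proof.
rewrite -(sum_cesaro N) (bigD1 o) //= lerDl.
by apply: sumr_ge0 => i _; apply: cesaro_ge0.
Qed.

End Distributions.

Lemma swap_outK : involutive swap_out.
Proof.
by case=> [[|[|[|[|k]]]] k_lt] //; apply: val_inj; rewrite /swap_out /= ?inordK.
Qed.

Lemma swap_out_inj : injective swap_out.
Proof. exact: inv_inj swap_outK. Qed.

Lemma swap_out_dd : swap_out dd = dd.
Proof. by rewrite /swap_out /= inordK. Qed.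

Section Symmetry.
Variable R : realType.

Lemma out_prob_swap (px py : R) o : out_prob px py (swap_out o) = out_prob py px o.
Proof.
by case: o => [[|[|[|[|k]]]] k_lt] //; rewrite /out_prob /swap_out /= ?inordK //=; ring.
Qed.

Lemma SX_swap (Rw Pn : R) o : SX Rw Pn o = SY Rw Pn (swap_out o).
Proof. by case: o => [[|[|[|[|k]]]] k_lt] //; rewrite /SX /SY /swap_out /= ?inordK. Qed.

Variables (p1 p2 : memvec R) (x1 x2 : bool).

Lemma hist_prob_swap h :
  hist_prob p1 x1 (mem_pattern p2 x2) h =
  hist_prob p2 x2 (mem_pattern p1 x1) (map swap_out h).
Proof.
rewrite /hist_prob size_map; apply: eq_bigr => k _.
rewrite -map_take (nth_map ord0) // -out_prob_swap.
by case: (take k h) => [|o h'] //=; rewrite last_map swap_outK.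
Qed.

Lemma round_dist_swap n o :
  round_dist p1 x1 (mem_pattern p2 x2) n o =
  round_dist p2 x2 (mem_pattern p1 x1) n (swap_out o).
Proof.
rewrite /round_dist (reindex_inj (h := map_tuple swap_out)) /=; last first.
  move=> t t' /(congr1 val) /= /(congr1 (map swap_out)).
  by rewrite !mapK //; [move/val_inj | exact: swap_outK..].
apply: eq_big => t; first by rewrite tnth_map -{1}(swap_outK o) (inj_eq swap_out_inj).
by move=> _; rewrite hist_prob_swap mapK //; exact: swap_outK.
Qed.

Lemma cesaro_payoff_swap (Rw Pn : R) N :
  dotv (Defs.cesaro p1 x1 (mem_pattern p2 x2) N) (SX Rw Pn) =
  dotv (Defs.cesaro p2 x2 (mem_pattern p1 x1) N) (SY Rw Pn).
Proof.
rewrite /dotv (reindex_inj swap_out_inj) /=; apply: eq_bigr => o _.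
rewrite SX_swap swap_outK; congr (_ * _); rewrite /Defs.cesaro; congr (_ * _).
by apply: eq_bigr => n _; rewrite round_dist_swap swap_outK.
Qed.

End Symmetry.

Section MemoryOne.
Variable R : realType.
Variables (p p' : memvec R) (x0 y0 : bool).
Hypotheses (p01 : is_memvec p) (p'01 : is_memvec p').
Let q := mem_pattern p' y0.

Lemma round_dist_memory_one_step n o1 o2 :
  out_prob (p o1) (p' (swap_out o1)) o2 * round_dist p x0 q n o1
  <= round_dist p x0 q n.+1 o2.
Proof.
have q01 : is_pattern q by exact: memvec_pattern.
rewrite (round_distE _ _ _ n.+1) /round_dist mulr_sumr.
rewrite [leRHS](bigID (fun t : n.+1.-tuple outcome => tnth t ord_max == o1)) /=.
rewrite -[leLHS]addr0; apply: lerD.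
  apply: ler_sum => t /eqP t_o1; rewrite mulrC.
  case: (last_tuple t) => o [h [t_eq last_o]].
  by rewrite t_eq /q /= last_o t_o1.
apply: sumr_ge0 => t _; apply: mulr_ge0; first exact: hist_prob_ge0.
by apply: out_prob_ge0; [exact: Xprob_in01 | exact: q01].
Qed.

End MemoryOne.

Section Dotv.
Variable R : realType.

Lemma dotv_point_mass (d S : outcome -> R) o :
  (forall o, 0 <= d o) -> \sum_(o < 4) d o = 1 -> d o = 1 -> dotv d S = S o.
Proof.
move=> d_ge0 d_sum1 do1.
have rest0 : \sum_(o' < 4 | o' != o) d o' = 0.
  by move: d_sum1; rewrite (bigD1 o) //= do1 => ?; lra.
have d0 := psumr_eq0P (fun o' _ => d_ge0 o') rest0.
by rewrite /dotv (bigD1 o) //= big1 ?addr0 ?do1 ?mul1r // => o' /d0 ->; rewrite mul0r.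
Qed.

Lemma cvg_dotv (w : nat -> outcome -> R) (v S : outcome -> R) :
  (forall o, w n o @[n --> \oo] --> v o) -> dotv (w n) S @[n --> \oo] --> dotv v S.
Proof.
move=> wv; apply: cvg_big => [|o _]; first exact: add_continuous.
exact: cvgMr_tmp.
Qed.

End Dotv.

Section SelfPlay.
Variables (R : realType) (p : memvec R).
Hypotheses (p01 : is_memvec p) (p_firm : firm p).

Lemma firm_self_round_dd n : round_dist p false (mem_pattern p false) n dd = 1.
Proof.
have q01 := memvec_pattern false p01.
elim: n => [|n IH].
  rewrite round_distE (eq_bigr (fun=> 1)) ?sumr_const ?card_tuple // => t _.
  by rewrite tuple0 /hist_prob big_ord0 out_prob_dd /= !subr0 !mul1r.
apply/le_anti; rewrite round_dist_le1 //=.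
have := round_dist_memory_one_step false false p01 p01 n dd dd.
by rewrite IH swap_out_dd p_firm out_prob_dd !subr0 !mulr1.
Qed.

Lemma firm_self_payoff (Rw Pn : R) : payoffA Rw Pn p false p false = Pn.
Proof.
have q01 := memvec_pattern false p01.
rewrite /payoffA (_ : (fun N => _) = fun=> Pn) ?lim_cst //; apply: funext => N.
rewrite (@dotv_point_mass _ _ _ dd (cesaro_ge0 false p01 q01 N) (sum_cesaro _ _ _ N)).
  by rewrite /SX /= inordK.
rewrite /Defs.cesaro (eq_bigr (fun=> 1)) => [|n _]; last exact: firm_self_round_dd.
by rewrite sumr_const card_ord mulVf // pnatr_eq0.
Qed.

End SelfPlay.

Section Cesaro.
Variables (R : realType) (p : memvec R) (x0 : bool) (q : pattern R).
Hypotheses (p01 : is_memvec p) (q01 : is_pattern q).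
Local Notation rd := (round_dist p x0 q).
Local Notation ces := (Defs.cesaro p x0 q).

Lemma cesaro_step_lb (a : R) o1 o2 N : 0 <= a ->
  (forall n, a * rd n o1 <= rd n.+1 o2) ->
  a * (N.+1%:R * ces N o1 - 1) <= N.+1%:R * ces N o2.
Proof.
move=> a_ge0 step.
have sumE o : N.+1%:R * ces N o = \sum_(n < N.+1) rd n o.
  by rewrite /Defs.cesaro mulrA mulfV ?mul1r // pnatr_eq0.
rewrite !sumE; suff partial_lb : a * (\sum_(n < N.+1) rd n o1 - rd N o1)
    <= \sum_(n < N.+1) rd n o2.
  apply: le_trans partial_lb; apply: ler_wpM2l => //.
  by rewrite lerD2l lerN2 round_dist_le1.
elim: N {sumE} => [|N IH].
  by rewrite big_ord1 subrr mulr0 sumr_ge0 // => n _; apply: round_dist_ge0.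
rewrite (big_ord_recr N.+1) [leRHS](big_ord_recr N.+1) /= addrK.
by apply: le_trans (lerD IH (step N)); rewrite -mulrDr subrK.
Qed.

Lemma limit_dist_neq1 (a : R) o1 o2 v : 0 < a <= 1 -> o1 != o2 ->
  (forall n, a * rd n o1 <= rd n.+1 o2) -> limit_dist p x0 q v -> v o1 <> 1.
Proof.
move=> /andP[a_gt0 a_le1] o12 step v_lim v1.
have [|N [N3 close]] := v_lim (a / 4) _ 3%N; first by rewrite divr_gt0.
have c1 : 1 - a / 4 < ces N o1 by move: (close o1); rewrite v1 ltr_norml; lra.
have c12 : ces N o1 + ces N o2 <= 1.
  have := sum_cesaro p x0 q N; rewrite (bigD1 o1) // (bigD1 o2) 1?eq_sym //=.
  have : 0 <= \sum_(o < 4 | (o != o1) && (o != o2)) ces N o.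
    by apply: sumr_ge0 => o _; apply: cesaro_ge0.
  lra.
have c2 := cesaro_ge0 x0 p01 q01 N o2.
have K4 : 4 <= N.+1%:R :> R by rewrite (ler_nat _ 4).
(* Mass above 1 - a/4 at o1 leaves less than a/4 for o2, whereas the flow from
   o1 puts at least a (ces N o1 - 1/(N+1)) >= a/2 there. *)
have := cesaro_step_lb N (ltW a_gt0) step.
set K : R := N.+1%:R in K4 *; set c1' := ces N o1 in c1 c12 *; set c2' := ces N o2 in c2 c12 *.
have e1 : K * c2' < K * (a / 4) by rewrite ltr_pM2l; lra.
have e2 : a * K * (1 - a / 4) < a * K * c1' by rewrite ltr_pM2l ?mulr_gt0 //; lra.
have e3 : a * 1 <= a * (K * (3 - a) / 4 - 1) by rewrite ler_pM2l //; nra.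
nra.
Qed.

Lemma limit_dist_payoff (S : outcome -> R) :
  cvgn (fun N => dotv (ces N) S) ->
  exists v, limit_dist p x0 q v /\ dotv v S = limn (fun N => dotv (ces N) S).
Proof.
move=> s_cvg.
have ces_bnd N o : `|ces N o| <= 1 by rewrite ger0_norm ?cesaro_ge0 ?cesaro_le1.
have [g [v [g_incr gv]]] := bolzano_weierstrass_fin ces_bnd.
exists v; split; first exact: limit_point_of_subseq g_incr gv.
have s_subseq := cvg_comp _ _ (increasing_seq_cvgn g_incr) s_cvg.
exact: cvg_unique _ _ (cvg_dotv (S := S) gv) s_subseq.
Qed.

End Cesaro.

Close Scope classical_set_scope.

Theorem theorem5p4 (R : realType) (Rw Pn : R)
  (hT : Rw < 1) (hRP : Pn < Rw) (hP : 0 < Pn) (h2R : 1 < 2 * Rw)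
  (I : finType) (vec : I -> memvec R) (init : I -> bool)
  (hvec : forall i, is_memvec (vec i))
  (istar : I)
  (hsf : strictly_firm Rw Pn (vec istar))
  (hinit : init istar = false)
  (hnf : forall j, j != istar -> ~ firm (vec j)) :
  let A := fun i j => payoffA Rw Pn (vec i) (init i) (vec j) (init j) in
  forall j, j != istar -> A j istar < A istar istar.
Proof.
move=> A j j_neq; have [ps_firm ps_strict] := hsf.
rewrite /A hinit firm_self_payoff //.
have ps01 := hvec istar; have pj01 := hvec j.
have q01 := memvec_pattern (init j) pj01.
rewrite /payoffA; under eq_fun do rewrite cesaro_payoff_swap.
(* a divergent payoff sequence has the junk limit 0 < Pn *)
set s := (fun N => _).
have [s_cvg | s_dvg] := pselect (cvgn s); last by rewrite limn_dvg.
have [v [v_lim <-]] := limit_dist_payoff ps01 q01 s_cvg.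
rewrite ltNge; apply/negP => /(ps_strict false _ q01 v v_lim).
apply: (@limit_dist_neq1 _ _ false _ ps01 q01 (vec j dd) dd dc v _ _ _ v_lim).
- have /andP[pj_ge0 ->] := pj01 dd; rewrite andbT lt_def pj_ge0 andbT.
  by apply/eqP => /(hnf j j_neq).
- by rewrite -(inj_eq val_inj) /= !inordK.
- move=> n; have := round_dist_memory_one_step false (init j) ps01 pj01 n dd dc.
  by rewrite swap_out_dd ps_firm out_prob_dc subr0 mul1r.
Qed.
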